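(* For every positive integer $n$, as formal power series in $z$ (with coefficients polynomials in $q,t$), \[ \sum_{k \geq 0} \overline{{ n+k-1 \brack k}}_{q,t} z^k q^k = \frac{(-tzq^2;q)_{n-1}}{(zq;q)_{n}}. \]
   Context: An overpartition is a partition (a non-increasing finite sequence of positive integers) in which the last (i.e. smallest-position-last) occurrence of each distinct part size may be overlined. Its weight $|\lambda|$ is the sum of its parts. For integers $a,b$ with $0\le b\le a$, $\overline{{a \brack b}}_{q,t}$ denotes the polynomial $\sum_{\lambda} t^{\#_o(\lambda)} q^{|\lambda|}$, the sum running over all overpartitions $\lambda$ with largest part at most $a-b$ and at most $b$ parts, where $\#_o(\lambda)$ is the number of overlined parts of $\lambda$; for other integer pairs $(a,b)$ it is $0$. Notation: $(x;q)_k=(x)_k=\prod_{j=1}^{k}(1-xq^{j-1})$, with $(x)_0=1$. *)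

From HB Require Import structures.
From mathcomp Require Import all_boot all_order all_algebra.
Set Implicit Arguments. Unset Strict Implicit. Unset Printing Implicit Defensive.
Import Order.TTheory GRing.Theory Num.Theory.
Local Open Scope ring_scope.

(* Coefficient ring: polynomials in q and t with integer coefficients,
   realised as {poly {poly int}}: q is the outer variable, t the inner one. *)
Definition R := {poly {poly int}}.
Definition q : R := 'X.
Definition t : R := ('X)%:P.

(* An overpartition is encoded as a list of (part, overlined?) pairs,
   listed in non-increasing order of parts. *)
Definition is_overpartition (s : seq (nat * bool)) : bool :=
  [&& sorted geq (map fst s),
      all (fun p => 0 < p.1)%N s &
      [forall i : 'I_(size s),
         (nth (0%N, false) s i).2 ==>
         [forall j : 'I_(size s), (i < j)%N ==>
            ((nth (0%N, false) s j).1 != (nth (0%N, false) s i).1)]]].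

Definition ovp_weight (s : seq (nat * bool)) : nat := sumn (map fst s).
Definition ovp_nover (s : seq (nat * bool)) : nat := count snd s.

Fixpoint words {T : Type} (A : seq T) (k : nat) : seq (seq T) :=
  if k is k'.+1 then [seq x :: w | x <- A, w <- words A k'] else [:: [::]].

Definition ovp_box (m b : nat) : seq (seq (nat * bool)) :=
  undup [seq s <- flatten [seq words [seq (p, o) | p <- iota 1 m, o <- [:: false; true]] k
                          | k <- iota 0 b.+1]
        | is_overpartition s].

Definition ovbin (a b : nat) : R :=
  if (b <= a)%N then
    \sum_(s <- ovp_box (a - b) b) t ^+ ovp_nover s * q ^+ ovp_weight s
  else 0.

(* (c z; q)_k = prod_{j<k} (1 - c q^j z), a polynomial in z over R *)
Definition qpoch (c : R) (k : nat) : {poly R} :=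
  \prod_(j < k) (1 - (c * q ^+ j) *: 'X).

Definition fps := nat -> R.
Definition fps_of_poly (p : {poly R}) : fps := fun k => p`_k.
Definition fps_mul (f g : fps) : fps :=
  fun m => \sum_(i < m.+1) f i * g (m - i)%N.

(* coefficients [b_m; ...; b_0] of the multiplicative inverse of f
   (valid when f 0 is a unit) *)
Fixpoint fps_inv_coefs (f : fps) (m : nat) : seq R :=
  if m is m'.+1 then
    let bs := fps_inv_coefs f m' in
    (- (\sum_(i < m'.+1) f i.+1 * nth 0 bs i) * (f 0%N)^-1) :: bs
  else [:: (f 0%N)^-1].
Definition fps_inv (f : fps) : fps := fun m => head 0 (fps_inv_coefs f m).

(* Let F(m, b) be the generating polynomial of overpartitions with parts at
   most m and at most b parts, so that the left-hand side is
   G_(n-1)(z) = sum_k F(n-1, k) q^k z^k.  Splitting off the largest part (smaller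
   than m+1, equal to m+1, or equal to m+1 and overlined, in which case it is
   the only part of that size) gives
     F(m+1, b+1) = F(m, b+1) + q^(m+1) F(m+1, b) + t q^(m+1) F(m, b),
   that is (1 - q^(m+2) z) G_(m+1) = (1 + t q^(m+2) z) G_m.  Since
   (1 - q z) G_0 = 1, induction on m gives (zq;q)_(m+1) G_m = (-tzq^2;q)_m.
   The power series identities are checked on truncations modulo z^N, where
   [take_poly N (p * r)] only depends on [take_poly N p] and [take_poly N r]. *)

From mathcomp Require Import all_boot all_order all_algebra.
From mathcomp Require Import ring zify.
Import GRing.Theory.
Local Open Scope ring_scope.

Lemma forall_ordS n (P : pred 'I_n.+1) :
  [forall i, P i] = P ord0 && [forall i : 'I_n, P (lift ord0 i)].
Proof.
apply/forallP/andP => [HP | [P0 /forallP HP] i]; first by split=> //; apply/forallP.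
by case: (unliftP ord0 i) => [j ->|->].
Qed.

Lemma forall_ord_nth {T : Type} (x0 : T) (a : pred T) s :
  [forall i : 'I_(size s), a (nth x0 s i)] = all a s.
Proof.
apply/forallP/(all_nthP x0) => [HP i lt_is | HP i]; last exact: HP.
exact: (HP (Ordinal lt_is)).
Qed.

Definition overlined_last (s : seq (nat * bool)) : bool :=
  [forall i : 'I_(size s),
     (nth (0%N, false) s i).2 ==>
     [forall j : 'I_(size s), (i < j)%N ==>
        ((nth (0%N, false) s j).1 != (nth (0%N, false) s i).1)]].

Lemma overlined_last_cons x s :
  overlined_last (x :: s) =
  (x.2 ==> all (fun y => y.1 != x.1) s) && overlined_last s.
Proof.
rewrite /overlined_last forall_ordS forall_ordS /=.
rewrite -(forall_ord_nth (0%N, false) (fun y => y.1 != x.1)).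
congr (_ && _); apply: eq_forallb => i; rewrite forall_ordS /=.
by congr (_ ==> _); apply: eq_forallb => j.
Qed.

Lemma is_overpartition_nil : is_overpartition [::].
Proof. by apply/and3P; split=> //; apply/forallP => -[]. Qed.

Lemma is_overpartition_cons x s :
  is_overpartition (x :: s) =
  [&& (0 < x.1)%N, all (fun y => y.1 <= x.1)%N s,
      x.2 ==> all (fun y => y.1 != x.1) s & is_overpartition s].
Proof.
have geq_trans : transitive geq by move=> a b c /= ba cb; apply: leq_trans cb ba.
rewrite /is_overpartition -/(overlined_last (x :: s)) -/(overlined_last s).
rewrite overlined_last_cons /= (path_sortedE geq_trans) all_map.
rewrite -[all (preim _ _) s]/(all (fun y => y.1 <= x.1)%N s).
by case: (0 < x.1)%N; case: (all (fun y => y.1 <= x.1)%N s); case: (x.2 ==> _);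
  case: (sorted _ _); case: (all _ s).
Qed.

Definition in_ovp_box (m b : nat) (s : seq (nat * bool)) : bool :=
  [&& is_overpartition s, (size s <= b)%N & all (fun y => y.1 <= m)%N s].

Lemma in_ovp_box_cons m b p o s :
  in_ovp_box m b.+1 ((p, o) :: s) =
  [&& (0 < p)%N, (p <= m)%N, o ==> all (fun y => y.1 != p) s & in_ovp_box p b s].
Proof.
rewrite /in_ovp_box is_overpartition_cons /= ltnS.
case: (leqP p m) => [le_pm | lt_mp]; last by rewrite !andbF.
case le_sp: (all _ s); last by rewrite !andbF.
have le_sm : all (fun y => y.1 <= m)%N s.
  by apply: sub_all le_sp => y /= le_yp; apply: leq_trans le_yp le_pm.
by rewrite le_sm /= !andbT -!andbA.
Qed.

Lemma in_ovp_box_nil m b : in_ovp_box m b [::].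
Proof. by rewrite /in_ovp_box is_overpartition_nil. Qed.

Lemma in_ovp_box0r m s : in_ovp_box m 0 s = (s == [::]).
Proof. by case: s => [|x s]; rewrite ?in_ovp_box_nil // /in_ovp_box /= andbF. Qed.

Lemma in_ovp_box0l b s : in_ovp_box 0 b s = (s == [::]).
Proof.
case: s => [|[p o] s]; first exact: in_ovp_box_nil.
case: b => [|b]; first by rewrite in_ovp_box0r.
by rewrite in_ovp_box_cons leqn0; case: p.
Qed.

Lemma in_ovp_box_notin m b s :
  in_ovp_box m.+1 b s && all (fun y => y.1 != m.+1) s = in_ovp_box m b s.
Proof.
have le_m : all (fun y => y.1 <= m)%N s
            = all (fun y => y.1 <= m.+1)%N s && all (fun y => y.1 != m.+1) s.
  by rewrite -all_predI; apply: eq_all => y /=; rewrite andbC -ltn_neqAle ltnS.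
by rewrite /in_ovp_box le_m !andbA.
Qed.

Fixpoint ovp_enum (m : nat) : nat -> seq (seq (nat * bool)) :=
  if m is m'.+1 then
    fix ovp_enum_m b :=
      if b is b'.+1 then
        ovp_enum m' b ++ [seq (m, false) :: s | s <- ovp_enum_m b']
                      ++ [seq (m, true) :: s | s <- ovp_enum m' b']
      else [:: [::]]
  else fun=> [:: [::]].

Lemma ovp_enumSS m b :
  ovp_enum m.+1 b.+1 =
  ovp_enum m b.+1 ++ [seq (m.+1, false) :: s | s <- ovp_enum m.+1 b]
                  ++ [seq (m.+1, true) :: s | s <- ovp_enum m b].
Proof. by []. Qed.

Lemma mem_map_cons {T : eqType} (x y : T) (L : seq (seq T)) s :
  (y :: s \in [seq x :: s | s <- L]) = (y == x) && (s \in L).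
Proof.
apply/mapP/andP => [[s' s'L [-> ->]] | [/eqP-> sL]]; last by exists s.
by rewrite eqxx.
Qed.

Lemma mem_ovp_enum m b s : (s \in ovp_enum m b) = in_ovp_box m b s.
Proof.
elim: m b s => [|m IHm] b s; first by rewrite in_ovp_box0l inE.
elim: b s => [|b IHb] s; first by rewrite in_ovp_box0r inE.
rewrite ovp_enumSS !mem_cat IHm.
case: s => [|[p o] s]; first by rewrite !in_ovp_box_nil.
rewrite !mem_map_cons IHb IHm !in_ovp_box_cons !xpair_eqE.
case: (ltngtP p m.+1) => [lt_pm | lt_mp | ->].
- by move: lt_pm; rewrite ltnS => ->; rewrite !orbF.
- by rewrite [(p <= m)%N]leqNgt (ltn_trans (ltnSn m) lt_mp) /= !andbF.
rewrite ltnn /=.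
by case: o; rewrite ?orbF //= -in_ovp_box_notin andbC.
Qed.

Lemma ovp_enum_uniq m b : uniq (ovp_enum m b).
Proof.
elim: m b => [|m IHm] b //; elim: b => [|b IHb] //.
have cons_inj x : injective (cons x : seq (nat * bool) -> _) by move=> s1 s2 [].
rewrite ovp_enumSS !cat_uniq !map_inj_uniq // IHm IHb IHm andbT.
have head_le_m s : s \in ovp_enum m b.+1 -> ((head (0%N, false) s).1 <= m)%N.
  by rewrite mem_ovp_enum; case: s => [|[p o] s] //; rewrite in_ovp_box_cons => /and3P[].
apply/and3P; split=> //.
  apply/hasPn => s'; rewrite mem_cat => /orP[] /mapP[s _ ->];
  by apply/negP => /head_le_m; rewrite ltnn.
by apply/hasPn => s' /mapP[s _ ->]; rewrite mem_map_cons xpair_eqE andbF.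
Qed.

Lemma mem_words {T : eqType} (A : seq T) k s :
  (s \in words A k) = (size s == k) && all (mem A) s.
Proof.
elim: k s => [|k IHk] [|x s] //=.
  by apply/allpairsP => -[[y w] [_ _]].
rewrite eqSS; apply/allpairsP/and3P => [[[y w] [yA wAk [-> ->]]] | [szs xA sA]].
  by move: wAk; rewrite /= IHk => /andP[-> ->].
by exists (x, s); split=> //=; rewrite IHk szs.
Qed.

Lemma mem_ovp_box m b s : (s \in ovp_box m b) = in_ovp_box m b s.
Proof.
rewrite /ovp_box mem_undup mem_filter.
apply/andP/idP => [[ovp_s /flatten_mapP[k]] | box_s].
  rewrite mem_iota mem_words add0n ltnS => /andP[_ le_kb] /andP[/eqP sz_s sA].
  rewrite /in_ovp_box ovp_s sz_s le_kb; apply/allP => y /(allP sA).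
  by case/allpairsP => -[p o] [+ _ ->]; rewrite mem_iota /=; lia.
have [ovp_s le_sb /allP le_sm] := and3P box_s.
have [_ /allP gt0_s _] := and3P ovp_s.
split=> //; apply/flatten_mapP; exists (size s); first by rewrite mem_iota.
rewrite mem_words eqxx; apply/allP => -[p o] ys; apply/allpairsP; exists (p, o).
have := le_sm _ ys; have := gt0_s _ ys.
by rewrite mem_iota /=; split=> //; [lia | case: o ys].
Qed.

Definition ovp_wt (s : seq (nat * bool)) : R := t ^+ ovp_nover s * q ^+ ovp_weight s.

Definition ovp_box_gf (m b : nat) : R := \sum_(s <- ovp_box m b) ovp_wt s.

Lemma ovbin_addn m k : ovbin (m + k) k = ovp_box_gf m k.
Proof. by rewrite /ovbin leq_addl addnK. Qed.

Lemma ovp_box_gf_enum m b : ovp_box_gf m b = \sum_(s <- ovp_enum m b) ovp_wt s.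
Proof.
apply: perm_big; apply: uniq_perm; rewrite ?undup_uniq ?ovp_enum_uniq // => s.
by rewrite mem_ovp_box mem_ovp_enum.
Qed.

Lemma ovp_box_gf0l b : ovp_box_gf 0 b = 1.
Proof. by rewrite ovp_box_gf_enum big_seq1 /ovp_wt mulr1. Qed.

Lemma ovp_box_gf0r m : ovp_box_gf m 0 = 1.
Proof. by case: m => [|m]; rewrite ovp_box_gf_enum big_seq1 /ovp_wt mulr1. Qed.

Lemma ovp_box_gfSS m b :
  ovp_box_gf m.+1 b.+1 =
  ovp_box_gf m b.+1 + q ^+ m.+1 * ovp_box_gf m.+1 b + t * q ^+ m.+1 * ovp_box_gf m b.
Proof.
rewrite !ovp_box_gf_enum ovp_enumSS !big_cat /= !big_map addrA !big_distrr.
congr (_ + _ + _); apply: eq_bigr => s _;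
by rewrite /ovp_wt /ovp_nover /ovp_weight /= ?add0n !exprD; ring.
Qed.

Section TakePolyMul.
Context {S : nzSemiRingType}.
Implicit Types p r : {poly S}.

Lemma take_polyMl n p r : take_poly n (take_poly n p * r) = take_poly n (p * r).
Proof.
rewrite -[in RHS](poly_take_drop n p) mulrDl take_polyD -mulrA.
by rewrite -(commr_polyXn r) mulrA take_polyMXn_0 addr0.
Qed.

Lemma take_polyMr n p r : take_poly n (p * take_poly n r) = take_poly n (p * r).
Proof.
by rewrite -[in RHS](poly_take_drop n r) mulrDr take_polyD mulrA take_polyMXn_0 addr0.
Qed.

End TakePolyMul.

Lemma take_poly_factorM {S : nzRingType} (a : S) (f : nat -> S) N :
  take_poly N ((1 - a *: 'X) * \poly_(i < N) f i) =
  \poly_(i < N) (f i - if i is i'.+1 then a * f i' else 0).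
Proof.
apply/polyP => i; rewrite coef_take_poly !coef_poly; case: ifP => // lt_iN.
rewrite mulrBl mul1r coefB -scalerAl coefZ coefXM !coef_poly lt_iN.
by case: i lt_iN => [|i] /= lt_iN; rewrite ?(ltnW lt_iN) ?mulr0.
Qed.

Definition fps_trunc (f : fps) (N : nat) : {poly R} := \poly_(i < N) f i.

Lemma fps_trunc_of_poly p N : fps_trunc (fps_of_poly p) N = take_poly N p.
Proof. by []. Qed.

Lemma coef_fps_mul f g N k :
  (k < N)%N -> fps_mul f g k = (fps_trunc f N * fps_trunc g N)`_k.
Proof.
move=> lt_kN; rewrite coefM; apply: eq_bigr => -[i /= le_ik] _.
by rewrite !coef_poly !(leq_ltn_trans _ lt_kN) ?leq_subr.
Qed.

Lemma nth_fps_inv_coefs f m i :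
  (i <= m)%N -> nth 0 (fps_inv_coefs f m) i = fps_inv f (m - i)%N.
Proof. by elim: m i => [|m IHm] [|i] //= le_im; rewrite IHm. Qed.

Lemma fps_invS f m :
  fps_inv f m.+1 = - (\sum_(i < m.+1) f i.+1 * fps_inv f (m - i)%N) * (f 0%N)^-1.
Proof.
congr (- _ * _); apply: eq_bigr => i _.
by rewrite nth_fps_inv_coefs // -ltnS.
Qed.

Lemma fps_mul_inv f m : f 0%N \is a GRing.unit ->
  fps_mul f (fps_inv f) m = (m == 0)%:R.
Proof.
move=> f0_unit; case: m => [|m]; rewrite /fps_mul.
  by rewrite big_ord1 /fps_inv /= mulrV.
rewrite big_ord_recl fps_invS mulrCA mulrV // mulr1 addrC.
by apply/eqP; rewrite subr_eq0; apply/eqP; apply: eq_bigr => i _.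
Qed.

Lemma take_poly_mul_inv (p : {poly R}) N : p`_0 \is a GRing.unit -> (0 < N)%N ->
  take_poly N (p * fps_trunc (fps_inv (fps_of_poly p)) N) = 1.
Proof.
move=> p0_unit N_gt0; rewrite -take_polyMl -fps_trunc_of_poly.
apply/polyP => i; rewrite coef_take_poly coef1.
case: ltnP => [lt_iN | le_Ni]; first by rewrite -coef_fps_mul // fps_mul_inv.
by rewrite (gtn_eqF (leq_trans N_gt0 le_Ni)).
Qed.

Lemma qpoch_coef0 c k : (qpoch c k)`_0 = 1.
Proof.
rewrite -horner_coef0 horner_prod big1 // => j _.
by rewrite hornerD hornerN hornerZ hornerX mulr0 subr0 hornerC.
Qed.

Lemma qpochS c k : qpoch c k.+1 = qpoch c k * (1 - (c * q ^+ k) *: 'X).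
Proof. by rewrite /qpoch big_ord_recr. Qed.

Definition ovp_box_fps m : fps := fun k => ovp_box_gf m k * q ^+ k.

Lemma ovp_box_fps_rec m N :
  take_poly N ((1 - (q * q ^+ m.+1) *: 'X) * fps_trunc (ovp_box_fps m.+1) N) =
  take_poly N ((1 - (- (t * q ^+ 2) * q ^+ m) *: 'X) * fps_trunc (ovp_box_fps m) N).
Proof.
rewrite !take_poly_factorM; apply: eq_poly => -[|j] _ /=.
  by rewrite /ovp_box_fps !ovp_box_gf0r.
by rewrite /ovp_box_fps ovp_box_gfSS !exprS; ring.
Qed.

Lemma qpoch_mul_ovp_box_fps m N :
  take_poly N (qpoch q m.+1 * fps_trunc (ovp_box_fps m) N) =
  take_poly N (qpoch (- (t * q ^+ 2)) m).
Proof.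
elim: m => [|m IHm].
  rewrite qpochS /qpoch !big_ord0 mul1r take_poly_factorM; apply/polyP => i.
  rewrite coef_poly coef_take_poly coef1 /ovp_box_fps; case: ifP => // _.
  by case: i => [|i]; rewrite !ovp_box_gf0l !mul1r ?subr0 // expr0 mulr1 exprS subrr.
rewrite [in RHS]qpochS qpochS -mulrA -take_polyMr ovp_box_fps_rec take_polyMr.
by rewrite mulrCA -[LHS]take_polyMr IHm take_polyMr mulrC.
Qed.

Theorem theorem1p1 (n : nat) (hn : (0 < n)%N) :
  (fun k : nat => ovbin (n + k - 1) k * q ^+ k)
  =1 fps_mul (fps_of_poly (qpoch (- (t * q ^+ 2)) n.-1))
             (fps_inv (fps_of_poly (qpoch q n))).
Proof.
case: n hn => // m _ k /=; rewrite addSn subn1 /= ovbin_addn.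
have coef_take (p : {poly R}) : (take_poly k.+1 p)`_k = p`_k.
  by rewrite coef_take_poly ltnSn.
rewrite [RHS](coef_fps_mul _ _ k.+1) // fps_trunc_of_poly -coef_take.
rewrite -qpoch_mul_ovp_box_fps take_polyMl mulrAC -take_polyMl take_poly_mul_inv //.
  by rewrite mul1r coef_take coef_poly ltnSn.
by rewrite qpoch_coef0 unitr1.
Qed.
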